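(* Let $A=\mathcal{W}(H,\theta,z_0,z_1)$ be a triangular generalized Weyl algebra, and give $A$ the $\mathbb{Z}$-grading with $\deg u=1$, $\deg d=-1$, $\deg H=0$; let $A[m]$ denote its degree-$m$ component. Then for every $m\in\mathbb{Z}$, $A[m]$ is isomorphic to $H[du]$ as a left $H[du]$-module.
   Context: $\mathbb{F}$ is a field, $H$ a commutative $\mathbb{F}$-algebra, $\theta:H\to H$ an $\mathbb{F}$-algebra automorphism, $z_0\in H$, $z_1\in H^\times$, and $\mathcal{W}(H,\theta,z_0,z_1):=H\langle d,u\rangle/(uh=\theta(h)u,\ hd=d\theta(h),\ ud=z_0+dz_1u\ \forall h\in H)$. Here $H[du]$ denotes the subalgebra of $A$ generated by $H$ and $du$ (which commutes with $H$). *)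

From HB Require Import structures.
From Stdlib Require List.
From mathcomp Require Import all_boot all_order all_algebra.
Set Implicit Arguments. Unset Strict Implicit. Unset Printing Implicit Defensive.
Import GRing.Theory.
Local Open Scope ring_scope.

Definition is_alg_hom (F : fieldType) (A B : algType F) (f : A -> B) : Prop :=
  [/\ forall (a : F) (x y : A), f (a *: x + y) = a *: f x + f y,
      f 1 = 1 &
      forall x y : A, f (x * y) = f x * f y].

Definition gwa_rel (F : fieldType) (H : comAlgType F) (theta : H -> H)
    (z0 z1 : H) (B : algType F) (iota : H -> B) (d u : B) : Prop :=
  [/\ forall h : H, u * iota h = iota (theta h) * u,
      forall h : H, iota h * d = d * iota (theta h) &
      u * d = iota z0 + d * iota z1 * u].

(* Universal property of the algebra presented by generators H, d, u
   and the relations above: (A, iota, d, u) is initial. *)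
Definition gwa_universal (F : fieldType) (H : comAlgType F) (theta : H -> H)
    (z0 z1 : H) (A : algType F) (iota : H -> A) (d u : A) : Prop :=
  forall (B : algType F) (iotaB : H -> B) (dB uB : B),
    is_alg_hom iotaB -> gwa_rel theta z0 z1 iotaB dB uB ->
    exists f : A -> B,
      [/\ is_alg_hom f, (forall h, f (iota h) = iotaB h), f d = dB, f u = uB &
          forall g : A -> B, is_alg_hom g -> (forall h, g (iota h) = iotaB h) ->
            g d = dB -> g u = uB -> forall x, g x = f x].

Definition is_gwa (F : fieldType) (H : comAlgType F) (theta : H -> H)
    (z0 z1 : H) (A : algType F) (iota : H -> A) (d u : A) : Prop :=
  is_alg_hom iota /\ gwa_rel theta z0 z1 iota d u /\
  gwa_universal theta z0 z1 iota d u.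

Inductive gletter (H : Type) := LH of H | LD | LU.
Arguments LD {H}. Arguments LU {H}.

Definition gletter_eval (F : fieldType) (H : comAlgType F) (A : algType F)
    (iota : H -> A) (d u : A) (l : gletter H) : A :=
  match l with LH h => iota h | LD => d | LU => u end.

Definition gword_eval (F : fieldType) (H : comAlgType F) (A : algType F)
    (iota : H -> A) (d u : A) (w : seq (gletter H)) : A :=
  foldr (fun l acc => gletter_eval iota d u l * acc) 1 w.

Definition gletter_deg (H : Type) (l : gletter H) : int :=
  match l with LH _ => 0 | LD => -1 | LU => 1 end.

Definition gword_deg (H : Type) (w : seq (gletter H)) : int :=
  \sum_(l <- w) gletter_deg l.

Definition gwa_comp (F : fieldType) (H : comAlgType F) (A : algType F)
    (iota : H -> A) (d u : A) (m : int) (a : A) : Prop :=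
  exists s : seq (F * seq (gletter H)),
    List.Forall (fun p => gword_deg p.2 = m) s /\
    a = \sum_(p <- s) p.1 *: gword_eval iota d u p.2.

(* H[du]: the subalgebra of A generated by iota(H) and du. *)
Definition Hdu_eval (F : fieldType) (H : comAlgType F) (A : algType F)
    (iota : H -> A) (d u : A) (w : seq (option H)) : A :=
  foldr (fun o acc => (match o with Some h => iota h | None => d * u end) * acc) 1 w.

Definition in_Hdu (F : fieldType) (H : comAlgType F) (A : algType F)
    (iota : H -> A) (d u : A) (a : A) : Prop :=
  exists s : seq (F * seq (option H)),
    a = \sum_(p <- s) p.1 *: Hdu_eval iota d u p.2.

Definition left_mod_iso (A : ringType) (R P Q : A -> Prop) (phi : A -> A) : Prop :=
  [/\ forall x, P x -> Q (phi x),
      forall x y, P x -> P y -> phi (x + y) = phi x + phi y,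
      forall r x, R r -> P x -> phi (r * x) = r * phi x,
      forall x y, P x -> P y -> phi x = phi y -> x = y &
      forall y, Q y -> exists2 x, P x & phi x = y].

Definition is_unit_elt (R : comRingType) (x : R) : Prop := exists y : R, x * y = 1.

(* Let g_m be u^m for m >= 0 and d^(-m) for m < 0. Both d and u normalize H[du] (for d this
   uses that z1 is a unit and theta is invertible), so every word of degree m is an element
   of H[du] times g_m, and right multiplication by g_m maps H[du] onto A[m].
   For injectivity: H[du] is commutative and contains u^n d^n and d^n u^n, so z g_m = 0
   forces (u^n d^n) z = 0 or (d^n u^n) z = 0. Write z = sum_i d^i c_i u^i. By the universal
   property A acts on grids (h_(p,q)) of coefficients, standing for sum d^p h_(p,q) u^q;
   z sends the corner grid to the diagonal grid (c_i), on which powers of d act injectively,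
   and so do powers of u since z1 is a unit and theta is injective. Hence every c_i is 0. *)

From HB Require Import structures.
From mathcomp Require Import all_boot all_order all_algebra.
From mathcomp Require Import boolp functions.
From mathcomp Require Import zify.
Set Implicit Arguments. Unset Strict Implicit. Unset Printing Implicit Defensive.
Import GRing.Theory.
Local Open Scope ring_scope.

Section AlgHom.
Variables (F : fieldType) (A B : algType F) (f : A -> B).
Hypothesis fH : is_alg_hom f.

Let f_linear : linear f. Proof. by case: fH. Qed.
HB.instance Definition _ := GRing.isLinear.Build F A B *:%R f f_linear.
Let f_monoid : monoid_morphism f. Proof. by case: fH. Qed.
HB.instance Definition _ := GRing.isMonoidMorphism.Build A B f f_monoid.

Lemma alg_hom0 : f 0 = 0. Proof. exact: raddf0. Qed.
Lemma alg_homD : {morph f : x y / x + y}. Proof. exact: raddfD. Qed.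
Lemma alg_homZ a : {morph f : x / a *: x}. Proof. exact: linearZ. Qed.
Lemma alg_hom1 : f 1 = 1. Proof. exact: rmorph1. Qed.
Lemma alg_homM : {morph f : x y / x * y}. Proof. exact: rmorphM. Qed.
Lemma alg_homX n : {morph f : x / x ^+ n}. Proof. exact: rmorphXn. Qed.
Lemma alg_hom_sum I r (P : pred I) (G : I -> A) :
  f (\sum_(i <- r | P i) G i) = \sum_(i <- r | P i) f (G i).
Proof. exact: raddf_sum. Qed.

End AlgHom.

Lemma alg_hom_comp (F : fieldType) (A B C : algType F) (f : A -> B) (g : B -> C) :
  is_alg_hom f -> is_alg_hom g -> is_alg_hom (g \o f).
Proof.
move=> fH gH; split=> [a x y|/=|x y /=]; last by rewrite !alg_homM.
  by rewrite /= alg_homD // alg_homZ // alg_homD // alg_homZ.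
by rewrite !alg_hom1.
Qed.

Lemma alg_hom_iter (F : fieldType) (A : algType F) (f : A -> A) n :
  is_alg_hom f -> is_alg_hom (iter n f).
Proof. by move=> fH; elim: n => [|n IH] //; exact: alg_hom_comp IH fH. Qed.

Section Endomorphisms.
Variables (R : comPzRingType) (V : lmodType R).

Record endo := Endo { endo_fun :> V -> V; endo_linear : linear endo_fun }.

HB.instance Definition _ (f : endo) := GRing.isLinear.Build R V V *:%R f (endo_linear f).
HB.instance Definition _ := gen_eqMixin endo.
HB.instance Definition _ := gen_choiceMixin endo.

Lemma endoP (f g : endo) : f =1 g -> f = g.
Proof.
case: f g => [f fL] [g gL] /= /funext efg; subst g.
by rewrite (Prop_irrelevance fL gL).
Qed.

Let zero_linear : linear (fun _ : V => 0 : V).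
Proof. by move=> a x y; rewrite scaler0 addr0. Qed.
Let add_linear (f g : endo) : linear (fun x => f x + g x).
Proof. by move=> a x y; rewrite !linearP scalerDr addrACA. Qed.
Let opp_linear (f : endo) : linear (fun x => - f x).
Proof. by move=> a x y; rewrite linearP opprD scalerN. Qed.
Let one_linear : linear (@id V).
Proof. by []. Qed.
Let mul_linear (f g : endo) : linear (fun x => f (g x)).
Proof. by move=> a x y; rewrite !linearP. Qed.
Let scale_linear (a : R) (f : endo) : linear (fun x => a *: f x).
Proof. by move=> b x y; rewrite linearP scalerDr !scalerA mulrC. Qed.

Definition endo_zero := Endo zero_linear.
Definition endo_add f g := Endo (add_linear f g).
Definition endo_opp f := Endo (opp_linear f).
Definition endo_one := Endo one_linear.
Definition endo_mul f g := Endo (mul_linear f g).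
Definition endo_scale a f := Endo (scale_linear a f).

Let endo_addA : associative endo_add.
Proof. by move=> f g h; apply: endoP => x; exact: addrA. Qed.
Let endo_addC : commutative endo_add.
Proof. by move=> f g; apply: endoP => x; exact: addrC. Qed.
Let endo_add0 : left_id endo_zero endo_add.
Proof. by move=> f; apply: endoP => x; exact: add0r. Qed.
Let endo_addN : left_inverse endo_zero endo_opp endo_add.
Proof. by move=> f; apply: endoP => x; exact: addNr. Qed.
HB.instance Definition _ := GRing.isZmodule.Build endo endo_addA endo_addC endo_add0 endo_addN.

Let endo_mulA : associative endo_mul. Proof. by move=> f g h; apply: endoP. Qed.
Let endo_mul1 : left_id endo_one endo_mul. Proof. by move=> f; apply: endoP. Qed.
Let endo_mulr1 : right_id endo_one endo_mul. Proof. by move=> f; apply: endoP. Qed.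
Let endo_mulDl : left_distributive endo_mul endo_add. Proof. by move=> f g h; apply: endoP. Qed.
Let endo_mulDr : right_distributive endo_mul endo_add.
Proof. by move=> f g h; apply: endoP => x; exact: linearD. Qed.
HB.instance Definition _ := GRing.Zmodule_isPzRing.Build endo
  endo_mulA endo_mul1 endo_mulr1 endo_mulDl endo_mulDr.

Let endo_scaleA a b f : endo_scale a (endo_scale b f) = endo_scale (a * b) f.
Proof. by apply: endoP => x; exact: scalerA. Qed.
Let endo_scale1 : left_id 1 endo_scale.
Proof. by move=> f; apply: endoP => x; exact: scale1r. Qed.
Let endo_scaleDr : right_distributive endo_scale endo_add.
Proof. by move=> a f g; apply: endoP => x; exact: scalerDr. Qed.
Let endo_scaleDl f : {morph endo_scale^~ f : a b / a + b}.
Proof. by move=> a b; apply: endoP => x; exact: scalerDl. Qed.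
HB.instance Definition _ := GRing.Zmodule_isLmodule.Build R endo
  endo_scaleA endo_scale1 endo_scaleDr endo_scaleDl.

Lemma endo_mulE (f g : endo) x : (f * g) x = f (g x). Proof. by []. Qed.
Lemma endo_scaleE a (f : endo) x : (a *: f) x = a *: f x. Proof. by []. Qed.

Lemma endo_expE (f : endo) k x : (f ^+ k) x = iter k f x.
Proof. by elim: k => [|k IH] //; rewrite exprS endo_mulE IH. Qed.

Lemma endo_sumE I r (P : pred I) (G : I -> endo) x :
  (\sum_(i <- r | P i) G i) x = \sum_(i <- r | P i) G i x.
Proof. exact: (big_morph (fun g : endo => g x)). Qed.

Lemma endo_scalerAl a (f g : endo) : a *: (f * g) = (a *: f) * g.
Proof. by apply: endoP. Qed.
Lemma endo_scalerAr a (f g : endo) : a *: (f * g) = f * (a *: g).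
Proof. by apply: endoP => x; rewrite endo_mulE !endo_scaleE linearZ. Qed.

End Endomorphisms.

Lemma unit_elt_lreg (R : comNzRingType) (x : R) : is_unit_elt x -> GRing.lreg x.
Proof. by move=> [y xy] a b /(congr1 ( *%R y)); rewrite !mulrA ![y * x]mulrC xy !mul1r. Qed.

Lemma unit_eltM (R : comNzRingType) (x y : R) :
  is_unit_elt x -> is_unit_elt y -> is_unit_elt (x * y).
Proof. by move=> [x' xx'] [y' yy']; exists (x' * y'); rewrite mulrACA xx' yy' mulr1. Qed.

Lemma alg_hom_unit_elt (F : fieldType) (A B : comAlgType F) (f : A -> B) (x : A) :
  is_alg_hom f -> is_unit_elt x -> is_unit_elt (f x).
Proof. by move=> fH [y xy]; exists (f y); rewrite -alg_homM // xy alg_hom1. Qed.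

Section GridEndomorphisms.
Variables (F : fieldType) (H : comAlgType F).
Local Notation grid := (nat -> nat -> H).

Lemma grid_endoP (f g : endo grid) : (forall v p q, f v p q = g v p q) -> f = g.
Proof. by move=> fg; apply: endoP => v; apply/funext => p; apply/funext => q. Qed.

Lemma grid_endo_oner_neq0 : (1 : endo grid) != 0.
Proof.
apply/eqP => /(congr1 (fun f : endo grid => f (fun _ _ => 1) 0%N 0%N))/eqP.
by rewrite oner_eq0.
Qed.

End GridEndomorphisms.

HB.instance Definition _ (F : fieldType) (H : comAlgType F) :=
  GRing.PzSemiRing_isNonZero.Build (endo (nat -> nat -> H)) (@grid_endo_oner_neq0 F H).
HB.instance Definition _ (F : fieldType) (H : comAlgType F) :=
  GRing.Lmodule_isLalgebra.Build F (endo (nat -> nat -> H)) (@endo_scalerAl _ _).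
HB.instance Definition _ (F : fieldType) (H : comAlgType F) :=
  GRing.Lalgebra_isAlgebra.Build F (endo (nat -> nat -> H)) (@endo_scalerAr _ _).

Section GridRepresentation.
Variables (F : fieldType) (H : comAlgType F) (theta : H -> H) (z0 z1 : H).
Hypothesis thetaH : is_alg_hom theta.
Local Notation grid := (nat -> nat -> H).

(* A grid [v] stands for [\sum_(p, q) d ^+ p * iota (v p q) * u ^+ q]; [twist_rows h],
   [shift_rows] and [raise] are left multiplication by [iota h], [d] and [u] on such sums,
   since [u * d ^+ p.+1 = d ^+ p.+1 * iota (alpha p.+1) * u + d ^+ p * iota (beta p)]. *)
Fixpoint alpha p : H := if p is p'.+1 then iter p' theta z1 * alpha p' else 1.
Fixpoint beta p : H :=
  if p is p'.+1 then iter p theta z0 + iter p' theta z1 * beta p' else z0.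

Definition twist_rows (h : H) (v : grid) : grid := fun p q => iter p theta h * v p q.
Definition shift_rows (v : grid) : grid := fun p q => if p is p'.+1 then v p' q else 0.
Definition raise (v : grid) : grid := fun p q =>
  alpha p * (if q is q'.+1 then theta (v p q') else 0) + beta p * v p.+1 q.

Let grid_combE a (v w : grid) p q : (a *: v + w) p q = a *: v p q + w p q.
Proof. by []. Qed.

Let grid_addE (v w : grid) p q : (v + w) p q = v p q + w p q.
Proof. by []. Qed.

Let grid_linearP (f : grid -> grid) :
  (forall a v w p q, f (a *: v + w) p q = a *: f v p q + f w p q) -> linear f.
Proof. by move=> fL a v w; apply/funext => p; apply/funext => q; exact: fL. Qed.

Lemma twist_rows_linear h : linear (twist_rows h).
Proof.
by apply: grid_linearP => a v w p q; rewrite /twist_rows grid_combE mulrDr scalerAr.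
Qed.

Lemma shift_rows_linear : linear shift_rows.
Proof.
by apply: grid_linearP => a v w [|p] q; rewrite /shift_rows ?grid_combE ?scaler0 ?addr0.
Qed.

Lemma raise_linear : linear raise.
Proof.
apply: grid_linearP => a v w p [|q]; rewrite /raise !grid_combE.
  by rewrite !mulr0 !add0r mulrDr scalerAr.
by rewrite (alg_homD thetaH) (alg_homZ thetaH) !mulrDr !scalerDr !scalerAr addrACA.
Qed.

Definition rep_iota h : endo grid := Endo (twist_rows_linear h).
Definition rep_d : endo grid := Endo shift_rows_linear.
Definition rep_u : endo grid := Endo raise_linear.

Lemma rep_iota_alg_hom : is_alg_hom rep_iota.
Proof.
have thpH p := alg_hom_iter p thetaH.
split=> [a x y||x y]; apply: grid_endoP => v p q /=; rewrite /twist_rows.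
- by rewrite (alg_homD (thpH p)) (alg_homZ (thpH p)) grid_combE mulrDl scalerAl.
- by rewrite (alg_hom1 (thpH p)) mul1r.
- by rewrite (alg_homM (thpH p)) mulrA.
Qed.

Lemma rep_gwa_rel : gwa_rel theta z0 z1 rep_iota rep_d rep_u.
Proof.
split=> [h|h|]; apply: grid_endoP => v p q; rewrite !endo_mulE /=.
- rewrite /raise /twist_rows -iterSr /=.
  case: q => [|q]; rewrite ?mulr0 ?add0r; first by rewrite mulrCA.
  by rewrite (alg_homM thetaH) mulrDr [alpha p * _]mulrCA [beta p * _]mulrCA.
- by case: p => [|p]; rewrite /shift_rows /twist_rows ?mulr0 // iterSr.
- rewrite grid_addE /raise /shift_rows /twist_rows.
  case: p => [|p] /=; last by rewrite mulrDl mulrDr !mulrA addrCA.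
  by case: q => [|q]; rewrite ?(alg_hom0 thetaH) mul1r add0r addr0.
Qed.

Definition vanishes_from J (v : grid) := forall p q, (J <= q)%N -> v p q = 0.

Lemma shift_rows_vanishes J v : vanishes_from J v -> vanishes_from J (shift_rows v).
Proof. by move=> vJ [|p] q Jq; rewrite /shift_rows // vJ. Qed.

Lemma raise_vanishes J v : vanishes_from J v -> vanishes_from J.+1 (raise v).
Proof.
move=> vJ p [|q] Jq //; rewrite /raise vJ // (vJ p.+1 q.+1) ?(alg_hom0 thetaH) ?mulr0 ?addr0 //.
exact: ltnW.
Qed.

Lemma shift_rows_eq0 v : shift_rows v = 0 -> v = 0.
Proof.
by move=> v0; apply/funext => p; apply/funext => q; exact: (congr1 (fun w => w p.+1 q) v0).
Qed.

Lemma rep_dX_eq0 k v : (rep_d ^+ k) v = 0 -> v = 0.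
Proof. by rewrite endo_expE; elim: k => [|k IH] //= /shift_rows_eq0/IH. Qed.

Lemma rep_dX_vanishes k J v : vanishes_from J v -> vanishes_from J ((rep_d ^+ k) v).
Proof. by rewrite endo_expE; elim: k => [|k IH] //= vJ; exact/shift_rows_vanishes/IH. Qed.

Definition corner q0 : grid := fun p q => if (p == 0%N) && (q == q0) then 1 else 0.

Definition diag_grid (c : nat -> H) N : grid :=
  fun p q => if (p == q) && (p < N)%N then c p else 0.

Lemma diag_grid_vanishes c N : vanishes_from N (diag_grid c N).
Proof. by move=> p q Nq; rewrite /diag_grid; case: eqP => [->|] //=; rewrite ltnNge Nq. Qed.

Lemma raise_corner q0 : raise (corner q0) = corner q0.+1.
Proof.
apply/funext => p; apply/funext => -[|q]; rewrite /raise /corner /= !mulr0 addr0.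
  by case: (p == 0%N).
case: p => [|p] /=; last by rewrite (alg_hom0 thetaH) mulr0.
by rewrite eqSS mul1r; case: (q == q0); rewrite ?(alg_hom1 thetaH) ?(alg_hom0 thetaH).
Qed.

Lemma iter_shift_rows k v p q :
  iter k shift_rows v p q = if (k <= p)%N then v (p - k)%N q else 0.
Proof.
elim: k p => [|k IH] p; first by rewrite subn0.
by case: p => [|p] //=; rewrite IH ltnS subSS.
Qed.

Lemma rep_monomial_corner c i :
  (rep_d ^+ i * rep_iota c * rep_u ^+ i) (corner 0) =
  fun p q => if (p == i) && (q == i) then c else 0.
Proof.
rewrite !endo_mulE !endo_expE.
have -> : iter i raise (corner 0) = corner i by elim: i {c} => //= i ->; rewrite raise_corner.
apply/funext => p; apply/funext => q; rewrite iter_shift_rows /= /twist_rows /corner.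
case: (ltnP p i) => [ltpi|leip]; first by rewrite ltn_eqF.
case: (eqVneq p i) => [->|neqpi] /=.
  by rewrite subnn; case: (q == i); rewrite ?mulr1 ?mulr0.
have ltip : (i < p)%N by rewrite ltn_neqAle eq_sym neqpi.
by rewrite subn_eq0 leqNgt ltip mulr0.
Qed.

Lemma rep_diag_corner (c : nat -> H) N :
  (\sum_(i < N) rep_d ^+ i * rep_iota (c i) * rep_u ^+ i) (corner 0) = diag_grid c N.
Proof.
apply/funext => p; apply/funext => q.
rewrite endo_sumE (big_morph (fun w : grid => w p q) (id1 := 0) (op1 := +%R)) //.
under eq_bigr => i _ do rewrite rep_monomial_corner.
elim: N => [|N IH]; first by rewrite big_ord0 /diag_grid andbF.
rewrite big_ord_recr /= IH /diag_grid.
case: (eqVneq p N) => [->|neqpN] /=.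
  by rewrite ltnn ltnSn andbF add0r andbT eq_sym.
by rewrite addr0 [in RHS]ltnS [in RHS]leq_eqVlt (negbTE neqpN).
Qed.

Section Injectivity.
Hypothesis thetaI : injective theta.
Hypothesis z1U : is_unit_elt z1.

Lemma alpha_lreg p : GRing.lreg (alpha p).
Proof.
apply: unit_elt_lreg; elim: p => [|p IH] /=; first by exists 1; rewrite mulr1.
exact/unit_eltM/IH/alg_hom_unit_elt/z1U/alg_hom_iter.
Qed.

(* When [v] vanishes from column [J.+1] on, entry [(p, J.+1)] of [raise v] is
   [alpha p * theta (v p J)]. *)
Lemma raise_eq0 J v : vanishes_from J v -> raise v = 0 -> v = 0.
Proof.
elim: J v => [|J IH] v vJ v0; first by apply/funext => p; apply/funext => q; exact: vJ.
suff vJ' : vanishes_from J v by exact: IH vJ' v0.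
move=> p q; rewrite leq_eqVlt => /predU1P[<-|]; last exact: vJ.
have : alpha p * theta (v p J) = alpha p * 0.
  rewrite mulr0; move: (congr1 (fun w => w p J.+1) v0).
  by rewrite /raise (vJ p.+1) // mulr0 addr0.
by move/(@alpha_lreg p); rewrite -{1}(alg_hom0 thetaH) => /thetaI.
Qed.

Lemma rep_uX_eq0 k J v : vanishes_from J v -> (rep_u ^+ k) v = 0 -> v = 0.
Proof.
move=> vJ; rewrite endo_expE.
have viJ i : vanishes_from (i + J) (iter i raise v).
  by elim: i => [|i IH] //=; exact: raise_vanishes.
by elim: k => [|k IH] //= /(raise_eq0 (viJ k)).
Qed.

End Injectivity.

End GridRepresentation.

Arguments rep_d {F H}.
Arguments corner {F H}.

Section GeneralizedWeylAlgebra.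
Variables (F : fieldType) (H : comAlgType F) (theta theta' : H -> H) (z0 z1 : H).
Variables (A : algType F) (iota : H -> A) (d u : A).
Hypothesis thetaH : is_alg_hom theta.
Hypotheses (thetaK : cancel theta theta') (thetaVK : cancel theta' theta).
Hypothesis z1U : is_unit_elt z1.
Hypothesis iotaH : is_alg_hom iota.
Hypothesis u_iota : forall h, u * iota h = iota (theta h) * u.
Hypothesis iota_d : forall h, iota h * d = d * iota (theta h).
Hypothesis ud_rel : u * d = iota z0 + d * iota z1 * u.

Local Notation Hdu := (in_Hdu iota d u).
Local Notation Hdu_word := (Hdu_eval iota d u).

Lemma Hdu0 : Hdu 0.
Proof. by exists [::]; rewrite big_nil. Qed.

Lemma HduD x y : Hdu x -> Hdu y -> Hdu (x + y).
Proof. by move=> [s1 ->] [s2 ->]; exists (s1 ++ s2); rewrite big_cat. Qed.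

Lemma HduZ a x : Hdu x -> Hdu (a *: x).
Proof.
move=> [s ->]; exists (map (fun p => (a * p.1, p.2)) s).
by rewrite big_map scaler_sumr; apply: eq_bigr => p _; rewrite scalerA.
Qed.

Lemma HduB x y : Hdu x -> Hdu y -> Hdu (x - y).
Proof. by move=> Hx Hy; rewrite -scaleN1r; exact/HduD/HduZ. Qed.

Lemma Hdu_word_cat w1 w2 : Hdu_word (w1 ++ w2) = Hdu_word w1 * Hdu_word w2.
Proof. by elim: w1 => [|o w IH] /=; rewrite ?mul1r // IH mulrA. Qed.

Lemma Hdu_wordP w : Hdu (Hdu_word w).
Proof. by exists [:: (1, w)]; rewrite big_seq1 scale1r. Qed.

Lemma Hdu_ind (P : A -> Prop) :
  P 0 -> (forall x y, P x -> P y -> P (x + y)) -> (forall a x, P x -> P (a *: x)) ->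
  (forall w, P (Hdu_word w)) -> forall x, Hdu x -> P x.
Proof.
move=> P0 PD PZ Pw x [s ->]; elim: s => [|p s IH]; rewrite ?big_nil ?big_cons //.
exact/PD/IH/PZ.
Qed.

Lemma Hdu_word_ind (P : A -> Prop) :
  P 1 -> (forall h x, P x -> P (iota h * x)) -> (forall x, P x -> P (d * u * x)) ->
  forall w, P (Hdu_word w).
Proof. by move=> P1 Ph Pdu; elim=> [|[h|] w IH] //=; [apply: Ph | apply: Pdu]. Qed.

Lemma HduM x y : Hdu x -> Hdu y -> Hdu (x * y).
Proof.
move=> Hx [s ->]; elim/Hdu_ind: x / Hx => [|x1 x2 Hx1 Hx2|a x Hx|w].
- by rewrite mul0r; exact: Hdu0.
- by rewrite mulrDl; exact: HduD.
- by rewrite -scalerAl; exact: HduZ.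
exists (map (fun q => (q.1, w ++ q.2)) s).
by rewrite big_map mulr_sumr; apply: eq_bigr => q _; rewrite Hdu_word_cat scalerAr.
Qed.

Lemma Hdu1 : Hdu 1. Proof. exact: (Hdu_wordP [::]). Qed.
Lemma Hdu_iota h : Hdu (iota h). Proof. by have := Hdu_wordP [:: Some h]; rewrite /= mulr1. Qed.
Lemma Hdu_du : Hdu (d * u). Proof. by have := Hdu_wordP [:: None]; rewrite /= mulr1. Qed.

Lemma Hdu_normalized_by g :
  (forall h, exists2 x, Hdu x & g * iota h = x * g) ->
  (exists2 x, Hdu x & g * (d * u) = x * g) ->
  forall y, Hdu y -> exists2 x, Hdu x & g * y = x * g.
Proof.
move=> g_iota g_du.
pose P y := exists2 x, Hdu x & g * y = x * g.
apply: (@Hdu_ind P); rewrite /P.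
- by exists 0; rewrite ?mulr0 ?mul0r //; exact: Hdu0.
- move=> y1 y2 [x1 Hx1 E1] [x2 Hx2 E2]; exists (x1 + x2); first exact: HduD.
  by rewrite mulrDr mulrDl E1 E2.
- move=> a y [x Hx E]; exists (a *: x); first exact: HduZ.
  by rewrite -scalerAr -scalerAl E.
apply: (@Hdu_word_ind P); rewrite /P.
- by exists 1; rewrite ?mulr1 ?mul1r //; exact: Hdu1.
- move=> h y [x Hx E]; have [x' Hx' E'] := g_iota h.
  exists (x' * x); first exact: HduM.
  by rewrite mulrA E' -!mulrA E !mulrA.
move=> y [x Hx E]; have [x' Hx' E'] := g_du.
exists (x' * x); first exact: HduM.
by rewrite mulrA E' -!mulrA E !mulrA.
Qed.

Lemma Hdu_centralized_by g :
  (forall h, g * iota h = iota h * g) -> g * (d * u) = d * u * g ->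
  forall y, Hdu y -> g * y = y * g.
Proof.
move=> g_iota g_du.
pose P y := g * y = y * g.
apply: (@Hdu_ind P); rewrite /P.
- by rewrite mulr0 mul0r.
- by move=> y1 y2 E1 E2; rewrite mulrDr mulrDl E1 E2.
- by move=> a y E; rewrite -scalerAr -scalerAl E.
apply: (@Hdu_word_ind P); rewrite /P.
- by rewrite mulr1 mul1r.
- by move=> h y E; rewrite mulrA g_iota -!mulrA E !mulrA.
- by move=> y E; rewrite mulrA g_du -!mulrA E !mulrA.
Qed.

Lemma iota_du h : iota h * (d * u) = d * u * iota h.
Proof. by rewrite mulrA iota_d -mulrA -u_iota mulrA. Qed.

Lemma Hdu_comm x y : Hdu x -> Hdu y -> x * y = y * x.
Proof.
move=> Hx Hy; apply: Hdu_centralized_by Hy => [h|].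
  symmetry; apply: Hdu_centralized_by Hx => [h'|]; last exact: iota_du.
  by rewrite -!(alg_homM iotaH) mulrC.
by symmetry; apply: Hdu_centralized_by Hx => [h|]; first by rewrite iota_du.
Qed.

Lemma d_iota h : d * iota h = iota (theta' h) * d.
Proof. by rewrite iota_d thetaVK. Qed.

Lemma Hdu_ud : Hdu (u * d).
Proof.
by rewrite ud_rel d_iota -mulrA; exact: HduD (Hdu_iota _) (HduM (Hdu_iota _) Hdu_du).
Qed.

Lemma theta'M x y : theta' (x * y) = theta' x * theta' y.
Proof. by apply: (can_inj thetaK); rewrite (alg_homM thetaH) !thetaVK. Qed.

Lemma theta'1 : theta' 1 = 1.
Proof. by apply: (can_inj thetaK); rewrite (alg_hom1 thetaH) thetaVK. Qed.

(* Solving [u d = z0 + d z1 u] for [d u] expresses [d (d u)] as an element of H[du] times [d]. *)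
Lemma d_normalizes_Hdu y : Hdu y -> exists2 x, Hdu x & d * y = x * d.
Proof.
apply: Hdu_normalized_by => [h|].
  by exists (iota (theta' h)); [exact: Hdu_iota | exact: d_iota].
have [w z1w] := z1U.
exists (iota (theta' (theta' w)) * (d * u - iota (theta' z0))).
  exact: HduM (Hdu_iota _) (HduB Hdu_du (Hdu_iota _)).
have d_du_d : d * u * d = iota (theta' z0) * d + iota (theta' (theta' z1)) * (d * (d * u)).
  rewrite -mulrA ud_rel mulrDr d_iota !mulrA; congr (_ + _).
  by rewrite -[d * d * _]mulrA (d_iota z1) mulrA d_iota.
rewrite -mulrA mulrBl d_du_d addrC addKr [RHS]mulrA -(alg_homM iotaH).
by rewrite -!theta'M mulrC z1w !theta'1 (alg_hom1 iotaH) mul1r.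
Qed.

Lemma u_normalizes_Hdu y : Hdu y -> exists2 x, Hdu x & u * y = x * u.
Proof.
apply: Hdu_normalized_by => [h|].
  by exists (iota (theta h)); [exact: Hdu_iota | exact: u_iota].
by exists (u * d); [exact: Hdu_ud | rewrite mulrA].
Qed.

Lemma Hdu_uXdX n : Hdu (u ^+ n * d ^+ n).
Proof.
elim: n => [|n IH]; first by rewrite !expr0 mulr1; exact: Hdu1.
have [x Hx E] := u_normalizes_Hdu IH.
by rewrite exprS exprSr mulrA -(mulrA u) E -mulrA; exact: HduM Hx Hdu_ud.
Qed.

Lemma Hdu_dXuX n : Hdu (d ^+ n * u ^+ n).
Proof.
elim: n => [|n IH]; first by rewrite !expr0 mulr1; exact: Hdu1.
have [x Hx E] := d_normalizes_Hdu IH.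
by rewrite exprS exprSr mulrA -(mulrA d) E -mulrA; exact: HduM Hx Hdu_du.
Qed.

Lemma iota_dX h i : iota h * d ^+ i = d ^+ i * iota (iter i theta h).
Proof.
elim: i h => [|i IH] h; first by rewrite !expr0 mulr1 mul1r.
by rewrite exprS mulrA iota_d -mulrA IH mulrA iterSr.
Qed.

Fixpoint du_dX_lead i := if i is i'.+1 then theta (du_dX_lead i') * z1 else 1.
Fixpoint du_dX_const i :=
  if i is i'.+1 then du_dX_lead i' * z0 + theta (du_dX_const i') else 0.

Lemma du_dX i :
  d * u * d ^+ i = d ^+ i.+1 * iota (du_dX_lead i) * u + d ^+ i * iota (du_dX_const i).
Proof.
elim: i => [|i IH].
  by rewrite expr0 expr1 mulr1 /= (alg_hom1 iotaH) (alg_hom0 iotaH) mulr1 mulr0 addr0.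
have lead_d : d ^+ i.+1 * iota (du_dX_lead i) * u * d =
    d ^+ i.+1 * iota (du_dX_lead i * z0) + d ^+ i.+2 * iota (theta (du_dX_lead i) * z1) * u.
  rewrite -mulrA ud_rel mulrDr (alg_homM iotaH); congr (_ + _); first by rewrite mulrA.
  by rewrite (alg_homM iotaH) !mulrA -(mulrA _ (iota _) d) iota_d !mulrA -exprSr.
have const_d : d ^+ i * iota (du_dX_const i) * d = d ^+ i.+1 * iota (theta (du_dX_const i)).
  by rewrite -mulrA iota_d mulrA -exprSr.
rewrite [in LHS]exprSr mulrA IH mulrDl lead_d const_d /= (alg_homD iotaH) mulrDr.
by rewrite addrAC addrC.
Qed.

Definition diag_sum (c : nat -> H) N := \sum_(i < N) d ^+ i * iota (c i) * u ^+ i.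

Definition diag_expansion x :=
  exists N c, (forall i, (N <= i)%N -> c i = 0) /\ x = diag_sum c N.

Lemma diag_sum_widen c N k :
  (forall i, (N <= i)%N -> c i = 0) -> diag_sum c (N + k) = diag_sum c N.
Proof.
move=> cN; elim: k => [|k IH]; first by rewrite addn0.
rewrite addnS /diag_sum big_ord_recr /= -/(diag_sum c (N + k)) IH cN ?leq_addr //.
by rewrite (alg_hom0 iotaH) mulr0 mul0r addr0.
Qed.

Lemma diag_sum_eq0 c N : (forall i, (i < N)%N -> c i = 0) -> diag_sum c N = 0.
Proof.
move=> c0; rewrite /diag_sum big1 // => i _.
by rewrite c0 // (alg_hom0 iotaH) mulr0 mul0r.
Qed.

Lemma diag_expansion0 : diag_expansion 0.
Proof. by exists 0%N, (fun _ => 0); split => //; rewrite /diag_sum big_ord0. Qed.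

Lemma diag_expansionD x y : diag_expansion x -> diag_expansion y -> diag_expansion (x + y).
Proof.
move=> [N [c [cN ->]]] [M [c' [c'M ->]]].
exists (N + M)%N, (fun i => c i + c' i); split.
  move=> i le_NM_i; rewrite cN ?c'M ?addr0 //.
  - by apply: leq_trans le_NM_i; rewrite leq_addl.
  - by apply: leq_trans le_NM_i; rewrite leq_addr.
rewrite -(diag_sum_widen M cN) -(diag_sum_widen N c'M) [(M + N)%N]addnC.
rewrite /diag_sum -big_split.
by apply: eq_bigr => i _; rewrite (alg_homD iotaH) mulrDr mulrDl.
Qed.

Lemma diag_expansionZ a x : diag_expansion x -> diag_expansion (a *: x).
Proof.
move=> [N [c [cN ->]]]; exists N, (fun i => a *: c i); split.
  by move=> i Ni; rewrite cN ?scaler0.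
rewrite /diag_sum scaler_sumr; apply: eq_bigr => i _.
by rewrite (alg_homZ iotaH) scalerAl scalerAr.
Qed.

Lemma diag_expansion_iota h x : diag_expansion x -> diag_expansion (iota h * x).
Proof.
move=> [N [c [cN ->]]]; exists N, (fun i => iter i theta h * c i); split.
  by move=> i Ni; rewrite cN ?mulr0.
rewrite /diag_sum mulr_sumr; apply: eq_bigr => i _.
by rewrite !mulrA iota_dX (alg_homM iotaH) !mulrA.
Qed.

Lemma diag_expansion_du x : diag_expansion x -> diag_expansion (d * u * x).
Proof.
move=> [N [c [cN ->]]].
pose c_up k := if k is k'.+1 then du_dX_lead k' * theta (c k') else 0.
exists N.+1, (fun k => du_dX_const k * c k + c_up k); split.
  move=> [|k] Nk //; rewrite cN ?mulr0 ?add0r; last exact: ltnW.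
  by rewrite /c_up cN // (alg_hom0 thetaH) mulr0.
rewrite /diag_sum mulr_sumr.
under [RHS]eq_bigr => i _ do rewrite (alg_homD iotaH) mulrDr mulrDl.
rewrite big_split /= big_ord_recr /= cN // mulr0 (alg_hom0 iotaH) mulr0 mul0r addr0.
rewrite big_ord_recl /= (alg_hom0 iotaH) mulr0 mul0r add0r.
rewrite addrC -big_split; apply: eq_bigr => i _ /=.
rewrite /bump add0n /= !mulrA du_dX !mulrDl; congr (_ + _).
  by rewrite (alg_homM iotaH) -!mulrA (mulrA u) u_iota -mulrA -exprS.
by rewrite (alg_homM iotaH) mulrA.
Qed.

Lemma diag_expansion1 : diag_expansion 1.
Proof.
exists 1%N, (fun i => if i == 0%N then 1 else 0); split; first by case.
by rewrite /diag_sum big_ord1 /= (alg_hom1 iotaH) !expr0 !mulr1.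
Qed.

Lemma Hdu_diag_expansion x : Hdu x -> diag_expansion x.
Proof.
apply: Hdu_ind; [exact: diag_expansion0 | exact: diag_expansionD | exact: diag_expansionZ |].
apply: Hdu_word_ind;
  [exact: diag_expansion1 | exact: diag_expansion_iota | exact: diag_expansion_du].
Qed.

Local Notation Acomp := (gwa_comp iota d u).
Local Notation word := (gword_eval iota d u).

Lemma word_cat w1 w2 : word (w1 ++ w2) = word w1 * word w2.
Proof. by elim: w1 => [|l w IH] /=; rewrite ?mul1r // IH mulrA. Qed.

Lemma gwa_comp0 m : Acomp m 0.
Proof. by exists [::]; rewrite big_nil. Qed.

Lemma gwa_compD m x y : Acomp m x -> Acomp m y -> Acomp m (x + y).
Proof.
move=> [s1 [s1m ->]] [s2 [s2m ->]]; exists (s1 ++ s2).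
by rewrite big_cat; split=> //; exact/List.Forall_app.
Qed.

Lemma gwa_compZ m a x : Acomp m x -> Acomp m (a *: x).
Proof.
move=> [s [sm ->]]; exists (map (fun p => (a * p.1, p.2)) s).
split; first exact/List.Forall_map.
by rewrite big_map scaler_sumr; apply: eq_bigr => p _; rewrite scalerA.
Qed.

Lemma gwa_comp_word w : Acomp (gword_deg w) (word w).
Proof. by exists [:: (1, w)]; rewrite big_seq1 scale1r; split=> //; constructor. Qed.

Lemma gwa_compM m n x y : Acomp m x -> Acomp n y -> Acomp (m + n) (x * y).
Proof.
move=> [s [sm ->]] [t [tn ->]]; rewrite mulr_suml.
elim: sm => [|p s' pm _ IH]; first by rewrite big_nil; exact: gwa_comp0.
rewrite big_cons; apply: gwa_compD IH; rewrite -scalerAl; apply: gwa_compZ; rewrite mulr_sumr.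
exists (map (fun q => (q.1, p.2 ++ q.2)) t); split.
  apply/List.Forall_map; apply: List.Forall_impl tn => q qn.
  by rewrite /gword_deg big_cat -pm -qn.
by rewrite big_map; apply: eq_bigr => q _; rewrite word_cat scalerAr.
Qed.

Lemma gwa_comp1 : Acomp 0 1.
Proof. by have := gwa_comp_word [::]; rewrite /gword_deg big_nil. Qed.

Lemma gwa_comp_letter l : Acomp (gletter_deg l) (gletter_eval iota d u l).
Proof. by have := gwa_comp_word [:: l]; rewrite /= mulr1 /gword_deg big_seq1. Qed.

Lemma gwa_comp_Hdu x : Hdu x -> Acomp 0 x.
Proof.
apply: Hdu_ind; [exact: gwa_comp0 | exact: gwa_compD | exact: gwa_compZ |].
apply: Hdu_word_ind; first exact: gwa_comp1.
  by move=> h y /(gwa_compM (gwa_comp_letter (LH h))); rewrite add0r.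
move=> y /(gwa_compM (gwa_compM (gwa_comp_letter LD) (gwa_comp_letter LU))).
by rewrite addNr add0r.
Qed.

(* [Negz n] is [- n.+1]: this is [u ^+ m] for [m >= 0] and [d ^+ (- m)] otherwise. *)
Definition comp_gen (m : int) : A := if m is Negz n then d ^+ n.+1 else u ^+ `|m|%N.

Lemma gwa_comp_gen m : Acomp m (comp_gen m).
Proof.
have uX (n : nat) : Acomp n (u ^+ n).
  elim: n => [|n IH]; first exact: gwa_comp1.
  by rewrite exprS -add1n PoszD; exact: gwa_compM (gwa_comp_letter LU) IH.
have dX (n : nat) : Acomp (- n%:Z) (d ^+ n).
  elim: n => [|n IH]; first exact: gwa_comp1.
  by rewrite exprS -add1n PoszD opprD; exact: gwa_compM (gwa_comp_letter LD) IH.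
by case: m => n; [exact: uX | rewrite NegzE; exact: dX].
Qed.

Definition Hdu_multiple m y := exists2 x, Hdu x & y = x * comp_gen m.

Lemma Hdu_multiple0 m : Hdu_multiple m 0.
Proof. by exists 0; [exact: Hdu0 | rewrite mul0r]. Qed.

Lemma Hdu_multipleD m x y : Hdu_multiple m x -> Hdu_multiple m y -> Hdu_multiple m (x + y).
Proof. by move=> [a Ha ->] [b Hb ->]; exists (a + b); [exact: HduD | rewrite mulrDl]. Qed.

Lemma Hdu_multipleZ m c x : Hdu_multiple m x -> Hdu_multiple m (c *: x).
Proof. by move=> [a Ha ->]; exists (c *: a); [exact: HduZ | rewrite scalerAl]. Qed.

Lemma Hdu_multiple_iota m h y : Hdu_multiple m y -> Hdu_multiple m (iota h * y).
Proof.
by move=> [a Ha ->]; exists (iota h * a); [exact: HduM (Hdu_iota h) Ha | rewrite mulrA].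
Qed.

Lemma Hdu_multiple_d m y : Hdu_multiple m y -> Hdu_multiple (-1 + m) (d * y).
Proof.
move=> [a Ha ->]; have [a' Ha' E] := d_normalizes_Hdu Ha.
rewrite mulrA E; case: m => [[|n]|n] /=.
- have -> : -1 + 0%:Z = Negz 0 by lia.
  by exists a'; rewrite //= expr0 mulr1 expr1.
- have -> : -1 + n.+1%:Z = n by lia.
  by exists (a' * (d * u)); [exact: HduM Ha' Hdu_du | rewrite exprS !mulrA].
- have -> : -1 + Negz n = Negz n.+1 by lia.
  by exists a'; rewrite //= [d ^+ n.+2]exprS mulrA.
Qed.

Lemma Hdu_multiple_u m y : Hdu_multiple m y -> Hdu_multiple (1 + m) (u * y).
Proof.
move=> [a Ha ->]; have [a' Ha' E] := u_normalizes_Hdu Ha.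
rewrite mulrA E; case: m => [n|[|n]] /=.
- have -> : 1 + n%:Z = n.+1 by lia.
  by exists a'; rewrite //= exprS mulrA.
- have -> : 1 + Negz 0 = 0 by lia.
  by exists (a' * (u * d)); [exact: HduM Ha' Hdu_ud | rewrite /= expr0 expr1 mulr1 mulrA].
- have -> : 1 + Negz n.+1 = Negz n by lia.
  by exists (a' * (u * d)); [exact: HduM Ha' Hdu_ud | rewrite /= [d ^+ n.+2]exprS !mulrA].
Qed.

Lemma Hdu_multiple_word w : Hdu_multiple (gword_deg w) (word w).
Proof.
elim: w => [|l w IH]; first by exists 1; [exact: Hdu1 | rewrite /gword_deg big_nil mul1r].
rewrite /gword_deg big_cons -/(gword_deg w).
case: l => [h||] /=.
- by rewrite add0r; exact: Hdu_multiple_iota.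
- exact: Hdu_multiple_d.
- exact: Hdu_multiple_u.
Qed.

Lemma gwa_comp_Hdu_multiple m y : Acomp m y -> Hdu_multiple m y.
Proof.
move=> [s [sm ->]]; elim: sm => [|p s' pm _ IH].
  by rewrite big_nil; exact: Hdu_multiple0.
rewrite big_cons; apply: Hdu_multipleD IH; apply: Hdu_multipleZ.
by rewrite -pm; exact: Hdu_multiple_word.
Qed.

Hypothesis universal : gwa_universal theta z0 z1 iota d u.

(* In the grid representation [z = diag_sum c N] sends [corner 0] to the diagonal grid of
   [c]; [u ^+ n * d ^+ n] (or [d ^+ n * u ^+ n]) commutes with [z], hence kills that grid,
   while acting on it by injective maps. *)
Lemma Hdu_rreg_comp_gen m z : Hdu z -> z * comp_gen m = 0 -> z = 0.
Proof.
move=> Hz zm0.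
have [f [fH f_iota f_d f_u _]] :=
  universal (rep_iota_alg_hom thetaH) (rep_gwa_rel z0 z1 thetaH).
have [N [c [cN ez]]] := Hdu_diag_expansion Hz.
have fz : f z (corner 0) = diag_grid c N.
  rewrite ez /diag_sum (alg_hom_sum fH) -(rep_diag_corner z0 z1 thetaH) !endo_sumE.
  by apply: eq_bigr => i _; rewrite !(alg_homM fH) !(alg_homX fH) f_iota f_d f_u.
have f_kill w : Hdu w -> z * w = 0 -> f w (diag_grid c N) = 0.
  move=> Hw zw; rewrite -fz -endo_mulE -(alg_homM fH) (Hdu_comm Hw Hz) zw.
  by rewrite (alg_hom0 fH).
have diag0 : diag_grid c N = 0.
  have cNv : vanishes_from N (diag_grid c N) by exact: diag_grid_vanishes.
  case: m zm0 => n zm0.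
  - have := f_kill _ (Hdu_uXdX n); rewrite mulrA zm0 mul0r => /(_ erefl).
    rewrite (alg_homM fH) !(alg_homX fH) f_u f_d endo_mulE.
    by move/(rep_uX_eq0 (can_inj thetaK) z1U (rep_dX_vanishes n cNv))/rep_dX_eq0.
  - have := f_kill _ (Hdu_dXuX n.+1); rewrite mulrA zm0 mul0r => /(_ erefl).
    rewrite (alg_homM fH) !(alg_homX fH) f_u f_d endo_mulE.
    by move/rep_dX_eq0/(rep_uX_eq0 (can_inj thetaK) z1U cNv).
rewrite ez diag_sum_eq0 // => i ltiN.
by have := congr1 (fun v => v i i) diag0; rewrite /diag_grid eqxx ltiN.
Qed.

Lemma gwa_comp_Hdu_iso m : exists phi, left_mod_iso Hdu Hdu (Acomp m) phi.
Proof.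
exists (fun x => x * comp_gen m); split.
- by move=> x /gwa_comp_Hdu/gwa_compM/(_ (gwa_comp_gen m)); rewrite add0r.
- by move=> x y _ _; rewrite mulrDl.
- by move=> r x _ _; rewrite mulrA.
- move=> x y Hx Hy /= xy; apply/subr0_eq/(@Hdu_rreg_comp_gen m _ (HduB Hx Hy)).
  by rewrite mulrBl xy subrr.
- by move=> y /gwa_comp_Hdu_multiple[x Hx ->]; exists x.
Qed.

End GeneralizedWeylAlgebra.

Theorem proposition2p4 (F : fieldType) (H : comAlgType F) (theta : H -> H)
    (z0 z1 : H) (A : algType F) (iota : H -> A) (d u : A) :
  is_alg_hom theta -> bijective theta -> is_unit_elt z1 ->
  is_gwa theta z0 z1 iota d u ->
  forall m : int, exists phi : A -> A,
    left_mod_iso (in_Hdu iota d u) (in_Hdu iota d u) (gwa_comp iota d u m) phi.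
Proof.
move=> thetaH [theta' thetaK thetaVK] z1U [iotaH [[u_iota iota_d ud_rel] universal]] m.
exact: (gwa_comp_Hdu_iso thetaH thetaK thetaVK z1U iotaH u_iota iota_d ud_rel universal).
Qed.
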